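(* Assume the setting in the context with Assumptions (A1), (A2), (A3). For any $z\in\mathcal X$, $\min_{x\in X}\max_{y\in\mathcal Y}\hat f_r(x,y;z)=\max_{y\in\mathcal Y}\min_{x\in X}\hat f_r(x,y;z)$; hence $P(z)=\min_{x\in X}\Phi(x;z)=\max_{y\in\mathcal Y}\Psi_r(y;z)$.
   Context: $\mathcal X=\mathbb R^{d_1\times r}$ (Frobenius norm), $\mathcal Y=\mathbb R^{d_2}$, $\mathcal M=\{x:x^\top x=I_r\}$, $c(x)=x^\top x-I_r$, $A(x)=x(\frac32I_r-\frac12x^\top x)$; $C>\frac12+\sup_{x\in\mathcal M}\|x\|$, $X=\{x:\|x\|\le C\}$, $\bar X=\{A(x):\|x\|\le C\}$. $\partial$ is the Fréchet subdifferential. (A1) $h:\mathcal Y\to\mathbb R\cup\{+\infty\}$ proper, closed, $\zeta$-weakly convex ($h+\frac\zeta2\|\cdot\|^2$ convex), closed domain $Y$, locally Lipschitz on $Y$, $Y$ bounded. (A2) $f$ differentiable on an open set containing $\bar X\times Y$ with $\|\nabla_xf(x_1,y_1)-\nabla_xf(x_2,y_2)\|\le L_{xx}\|x_1-x_2\|+L_{xy}\|y_1-y_2\|$, $\|\nabla_yf(x_1,y_1)-\nabla_yf(x_2,y_2)\|\le L_{yx}\|x_1-x_2\|+L_{yy}\|y_1-y_2\|$ on $\bar X\times Y$. (A3) With $f_r=f-h$, there is $\mu>0$ with $\max_wf_r(x,w)-f_r(x,y)\le\frac1{2\mu}\mathrm{dist}^2(0,-\nabla_yf(x,y)+\partial h(y))$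 for all $x\in\bar X,y\in Y$. For $\rho>0$: $\tilde f(x,y)=f(A(x),y)+\frac\rho4\|c(x)\|^2$, $\tilde f_r=\tilde f-h$; $l$ is the (blockwise) Lipschitz constant of $\nabla\tilde f$ on $X\times Y$; standing choice $p>l$. For $x\in X,y\in Y,z\in\mathcal X$: $\hat f(x,y;z)=\tilde f(x,y)+\frac p2\|x-z\|^2$, $\hat f_r=\hat f-h$, $\Phi(x;z)=\max_{y\in\mathcal Y}\hat f_r(x,y;z)$, $\Psi_r(y;z)=\min_{x\in X}\hat f(x,y;z)-h(y)$, $P(z)=\min_{x\in X}\max_{y\in\mathcal Y}\hat f_r(x,y;z)$. *)

From HB Require Import structures.
From mathcomp Require Import all_boot all_order all_algebra.
From mathcomp Require Import classical_sets boolp reals constructive_ereal ereal.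
Set Implicit Arguments. Unset Strict Implicit. Unset Printing Implicit Defensive.
Import Order.TTheory GRing.Theory Num.Theory.
Local Open Scope ring_scope.
Local Open Scope classical_set_scope.

Section Defs.
Variable R : realType.

(* Frobenius inner product and norm on m x n matrices (row vectors of
   length d are 1 x d matrices, for which this is the Euclidean norm). *)
Definition fro_dot {m n} (A B : 'M[R]_(m, n)) : R :=
  \sum_(i < m) \sum_(j < n) A i j * B i j.
Definition fro_norm {m n} (A : 'M[R]_(m, n)) : R := Num.sqrt (fro_dot A A).

Definition is_grad {m n k} (F : 'M[R]_(m, n) -> 'rV[R]_k -> R)
  (gx : 'M[R]_(m, n)) (gy : 'rV[R]_k) (x : 'M[R]_(m, n)) (y : 'rV[R]_k) :=
  forall eps : R, 0 < eps -> exists2 delta : R, 0 < delta &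
    forall u v, fro_norm u + fro_norm v < delta ->
      `| F (x + u) (y + v) - F x y - fro_dot gx u - fro_dot gy v |
        <= eps * (fro_norm u + fro_norm v).

Definition open_pair {m n k} (U : set ('M[R]_(m, n) * 'rV[R]_k)) :=
  forall x y, U (x, y) -> exists2 eps : R, 0 < eps &
    forall x' y', fro_norm (x' - x) + fro_norm (y' - y) < eps -> U (x', y').

Definition closed_set {k} (S : set 'rV[R]_k) :=
  forall y, (forall eps : R, 0 < eps -> exists2 w, S w & fro_norm (w - y) < eps) -> S y.

Definition bounded_set {k} (S : set 'rV[R]_k) :=
  exists M : R, forall y, S y -> fro_norm y <= M.

Definition dom {k} (h : 'rV[R]_k -> \bar R) : set 'rV[R]_k :=
  [set y | (h y < +oo)%E].

Definition proper_fun {k} (h : 'rV[R]_k -> \bar R) :=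
  (forall y, h y != -oo%E) /\ exists y, (h y < +oo)%E.

(* closed = lower semicontinuous *)
Definition lsc {k} (h : 'rV[R]_k -> \bar R) :=
  forall y (a : \bar R), (a < h y)%E -> exists2 delta : R, 0 < delta &
    forall w, fro_norm (w - y) < delta -> (a < h w)%E.

Definition convex_fun {k} (g : 'rV[R]_k -> \bar R) :=
  forall y1 y2 (t : R), 0 <= t <= 1 ->
    (g (t *: y1 + (1 - t) *: y2)%R <= t%:E * g y1 + (1 - t)%:E * g y2)%E.

Definition weakly_convex {k} (zeta : R) (h : 'rV[R]_k -> \bar R) :=
  convex_fun (fun y => (h y + (zeta / 2 * fro_norm y ^+ 2)%:E)%E).

Definition locally_lipschitz_on {k} (h : 'rV[R]_k -> \bar R) (S : set 'rV[R]_k) :=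
  forall y, S y -> exists2 delta : R, 0 < delta & exists L : R,
    forall w1 w2, S w1 -> S w2 -> fro_norm (w1 - y) < delta ->
      fro_norm (w2 - y) < delta ->
      `| fine (h w1) - fine (h w2) | <= L * fro_norm (w1 - w2).

Definition frechet_subdiff {k} (h : 'rV[R]_k -> \bar R) (y : 'rV[R]_k) :
  set 'rV[R]_k :=
  [set v | h y \is a fin_num /\
    forall eps : R, 0 < eps -> exists2 delta : R, 0 < delta &
      forall w, fro_norm (w - y) < delta ->
        ((fine (h y) + fro_dot v (w - y) - eps * fro_norm (w - y))%:E <= h w)%E].

Definition cmap {d1 r} (x : 'M[R]_(d1, r)) : 'M[R]_r := x^T *m x - 1%:M.
Definition Amap {d1 r} (x : 'M[R]_(d1, r)) : 'M[R]_(d1, r) :=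
  x *m ((3 / 2 : R)%:M - (1 / 2 : R) *: (x^T *m x)).

Definition Xset {d1 r} (C : R) : set 'M[R]_(d1, r) := [set x | fro_norm x <= C].
Definition Xbar {d1 r} (C : R) : set 'M[R]_(d1, r) := Amap @` Xset C.

Definition ftilde {d1 r d2} (f : 'M[R]_(d1, r) -> 'rV[R]_d2 -> R) (rho : R)
  (x : 'M[R]_(d1, r)) (y : 'rV[R]_d2) : R :=
  f (Amap x) y + rho / 4 * fro_norm (cmap x) ^+ 2.

Definition fhat {d1 r d2} (f : 'M[R]_(d1, r) -> 'rV[R]_d2 -> R) (rho p : R)
  (x : 'M[R]_(d1, r)) (y : 'rV[R]_d2) (z : 'M[R]_(d1, r)) : R :=
  ftilde f rho x y + p / 2 * fro_norm (x - z) ^+ 2.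

Definition fhat_r {d1 r d2} (f : 'M[R]_(d1, r) -> 'rV[R]_d2 -> R)
  (h : 'rV[R]_d2 -> \bar R) (rho p : R) x y z : \bar R :=
  ((fhat f rho p x y z)%:E - h y)%E.

Definition Phi {d1 r d2} (f : 'M[R]_(d1, r) -> 'rV[R]_d2 -> R)
  (h : 'rV[R]_d2 -> \bar R) (rho p : R) x z : \bar R :=
  ereal_sup [set fhat_r f h rho p x y z | y in [set: 'rV[R]_d2]].

Definition Psi_r {d1 r d2} (f : 'M[R]_(d1, r) -> 'rV[R]_d2 -> R)
  (h : 'rV[R]_d2 -> \bar R) (rho p C : R) y z : \bar R :=
  (ereal_inf [set (fhat f rho p x y z)%:E | x in @Xset d1 r C] - h y)%E.

Definition min_attained {T} (S : set T) (F : T -> \bar R) :=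
  exists2 x, S x & F x = ereal_inf (F @` S).
Definition max_attained {T} (S : set T) (F : T -> \bar R) :=
  exists2 x, S x & F x = ereal_sup (F @` S).

End Defs.

(* Write [G x y = ftilde x y + p/2 |x - z|^2]. As the gradient of [ftilde] is
   [l]-Lipschitz and [p > l], [G (.) y] grows quadratically around its minimizer
   [xm y] on the ball [X]. Since [h] is lower semicontinuous and [dom h] is
   compact, the upper semicontinuous value function [y |-> G (xm y) y - h y]
   attains its maximum at some [ys]; put [xs = xm ys]. Comparing values at [ys]
   and at a nearby [w], the quadratic growth absorbs the displacement of
   [xm w], and [h w >= h ys + <gy xs ys, w - ys> - Q |w - ys|^2] follows, so
   [gy xs ys] is a Frechet subgradient of [h] at [ys]. By (A3) such a
   stationary point is a global maximizer of [f (A xs) (.) - h], hence of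
   [fhat_r xs (.)], while [xs] minimizes [fhat_r (.) ys] by construction:
   [(xs, ys)] is a saddle point, which yields min-max = max-min with all
   extrema attained. *)

From Pilot Require Import Defs.
From HB Require Import structures.
From mathcomp Require Import all_boot all_order all_algebra.
From mathcomp Require Import classical_sets boolp reals constructive_ereal ereal.
From mathcomp Require Import topology normedtype derive.
From mathcomp Require Import ring lra.
Import Order.TTheory GRing.Theory Num.Theory.
Import numFieldNormedType.Exports.
Local Open Scope ring_scope.
Local Open Scope classical_set_scope.
Set Implicit Arguments. Unset Strict Implicit. Unset Printing Implicit Defensive.

Section Frobenius.
Variables (R : realType) (m n : nat).
Implicit Types (A B D : 'M[R]_(m, n)) (a : R).

Lemma fro_dotC A B : fro_dot A B = fro_dot B A.
Proof. by apply: eq_bigr => i _; apply: eq_bigr => j _; rewrite mulrC. Qed.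

Lemma fro_dotDl A B D : fro_dot (A + B) D = fro_dot A D + fro_dot B D.
Proof.
rewrite /fro_dot -big_split; apply: eq_bigr => i _.
by rewrite -big_split; apply: eq_bigr => j _; rewrite mxE mulrDl.
Qed.

Lemma fro_dotZl a A D : fro_dot (a *: A) D = a * fro_dot A D.
Proof.
rewrite /fro_dot mulr_sumr; apply: eq_bigr => i _.
by rewrite mulr_sumr; apply: eq_bigr => j _; rewrite mxE mulrA.
Qed.

Lemma fro_dotBl A B D : fro_dot (A - B) D = fro_dot A D - fro_dot B D.
Proof. by rewrite fro_dotDl -scaleN1r fro_dotZl mulN1r. Qed.

Lemma fro_dotDr A B D : fro_dot D (A + B) = fro_dot D A + fro_dot D B.
Proof. by rewrite !(fro_dotC D) fro_dotDl. Qed.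

Lemma fro_dotZr a A D : fro_dot D (a *: A) = a * fro_dot D A.
Proof. by rewrite !(fro_dotC D) fro_dotZl. Qed.

Lemma fro_dot0r D : fro_dot D 0 = 0.
Proof. by rewrite -(scale0r (0 : 'M[R]_(m, n))) fro_dotZr mul0r. Qed.

Lemma fro_dot_ge0 A : 0 <= fro_dot A A.
Proof. by apply: sumr_ge0 => i _; apply: sumr_ge0 => j _; rewrite -expr2 sqr_ge0. Qed.

Lemma fro_dot_eq0 A : fro_dot A A = 0 -> A = 0.
Proof.
move=> A0; apply/matrixP => i j; rewrite mxE; apply/eqP.
have sq_ge0 k l : 0 <= A k l * A k l by rewrite -expr2 sqr_ge0.
have rows0 := psumr_eq0P (fun k _ => sumr_ge0 _ (fun l _ => sq_ge0 k l)) A0.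
have := psumr_eq0P (fun l _ => sq_ge0 i l) (@rows0 i isT) (i := j) isT.
by move/eqP; rewrite mulf_eq0 orbb.
Qed.

Lemma fro_norm_ge0 A : 0 <= fro_norm A.
Proof. exact: sqrtr_ge0. Qed.

Lemma sqr_fro_norm A : fro_norm A ^+ 2 = fro_dot A A.
Proof. by rewrite sqr_sqrtr // fro_dot_ge0. Qed.

Lemma fro_norm0 : fro_norm (0 : 'M[R]_(m, n)) = 0.
Proof. by rewrite /fro_norm fro_dot0r sqrtr0. Qed.

Lemma fro_normZ a A : fro_norm (a *: A) = `|a| * fro_norm A.
Proof.
by rewrite /fro_norm fro_dotZl fro_dotZr mulrA -expr2 sqrtrM ?sqrtr_sqr ?sqr_ge0.
Qed.

Lemma fro_distC A B : fro_norm (A - B) = fro_norm (B - A).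
Proof. by rewrite -opprB -scaleN1r fro_normZ normrN normr1 mul1r. Qed.

Lemma fro_norm_sqrD A B :
  fro_norm (A + B) ^+ 2 = fro_norm A ^+ 2 + 2 * fro_dot A B + fro_norm B ^+ 2.
Proof. by rewrite !sqr_fro_norm fro_dotDl !fro_dotDr (fro_dotC B A); ring. Qed.

Lemma fro_cauchy_schwarz A B : `|fro_dot A B| <= fro_norm A * fro_norm B.
Proof.
have [A0|A_neq0] := eqVneq A 0.
  by rewrite A0 fro_dotC fro_dot0r normr0 fro_norm0 mul0r.
have nA_gt0 : 0 < fro_dot A A.
  by rewrite lt_def fro_dot_ge0 andbT; apply: contra A_neq0 => /eqP/fro_dot_eq0->.
rewrite -sqrtr_sqr /fro_norm -sqrtrM ?fro_dot_ge0 //; apply: ler_wsqrtr.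
set a := fro_dot A A; set b := fro_dot A B; set c := fro_dot B B.
have := fro_dot_ge0 ((- (b / a)) *: A + B).
rewrite !fro_dotDl !fro_dotDr !fro_dotZl !fro_dotZr (fro_dotC B A) -/a -/b -/c.
have -> : - (b / a) * (- (b / a) * a) + - (b / a) * b + (- (b / a) * b + c)
  = (a * c - b ^+ 2) / a by field; rewrite gt_eqF.
by rewrite pmulr_lge0 ?invr_gt0 // subr_ge0.
Qed.

Lemma fro_dot_le_norm A B : fro_dot A B <= fro_norm A * fro_norm B.
Proof. exact: le_trans (ler_norm _) (fro_cauchy_schwarz _ _). Qed.

Lemma fro_normD A B : fro_norm (A + B) <= fro_norm A + fro_norm B.
Proof.
rewrite -(ler_pXn2r (n := 2)) ?nnegrE ?addr_ge0 ?fro_norm_ge0 //.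
by rewrite fro_norm_sqrD sqrrD; have := fro_dot_le_norm A B; lra.
Qed.

Lemma fro_entry_le A i j : `|A i j| <= fro_norm A.
Proof.
have sq_ge0 k l : 0 <= A k l * A k l by rewrite -expr2 sqr_ge0.
rewrite -sqrtr_sqr /fro_norm; apply: ler_wsqrtr.
rewrite /fro_dot (bigD1 i) //= (bigD1 j) //= expr2 -addrA lerDl.
by rewrite addr_ge0 ?sumr_ge0 // => k _; rewrite ?sumr_ge0.
Qed.

Lemma fro_norm_le_entries A a :
  0 <= a -> (forall i j, `|A i j| <= a) -> fro_norm A <= (m * n)%:R * a.
Proof.
move=> a_ge0 Aa.
have dot_le : fro_dot A A <= (m * n)%:R * a ^+ 2.
  apply: (@le_trans _ _ (\sum_(i < m) \sum_(j < n) a ^+ 2)).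
    apply: ler_sum => i _; apply: ler_sum => j _.
    by rewrite -expr2 -real_normK ?num_real // lerXn2r ?nnegrE.
  by rewrite !sumr_const !card_ord -mulrnA mulr_natl [(n * m)%N]mulnC.
have [mn0|mn_gt0] := posnP (m * n).
  move: dot_le; rewrite mn0 mul0r /fro_norm => dot_le0.
  have -> : fro_dot A A = 0 by apply/eqP; rewrite eq_le dot_le0 fro_dot_ge0.
  by rewrite sqrtr0 mul0r.
rewrite -(ler_pXn2r (n := 2)) ?nnegrE ?mulr_ge0 ?fro_norm_ge0 //.
rewrite sqr_fro_norm (le_trans dot_le) // exprMn ler_wpM2r ?sqr_ge0 //.
by rewrite expr2 ler_peMl // ler1n.
Qed.

End Frobenius.

Section UpperSemicontinuousMaximum.
Variable R : realType.

(* A cluster point of the filter of superlevel sets [phi > c] is a maximizer. *)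
Lemma compact_usc_max (T : pseudoMetricType R) (K : set T) (phi : T -> R) :
  compact K -> K !=set0 ->
  (forall y, K y -> forall e, 0 < e -> exists2 del, 0 < del &
     forall w, K w -> ball y del w -> phi w < phi y + e) ->
  exists2 y0, K y0 & forall y, K y -> phi y <= phi y0.
Proof.
move=> cK [y0 Ky0] usc.
pose D := [set c : R | exists2 w, K w & c < phi w].
pose B c := [set w | K w /\ c < phi w].
have D0 : D (phi y0 - 1) by exists y0 => //; lra.
have FF : ProperFilter (filter_from D B).
  apply: filter_from_proper => [|c [w Kw cw]]; last by exists w.
  apply: filter_from_filter; first by exists (phi y0 - 1).
  move=> i j Di Dj; have [ij|ij] := leP i j.
    by exists j => // w [Kw jw]; split; split => //; lra.
  by exists i => // w [Kw iw]; split; split => //; lra.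
have [x [Kx clx]] : exists x, K x /\ cluster (filter_from D B) x.
  by apply: cK; exists (phi y0 - 1) => // w [].
exists x => // y Ky; rewrite leNgt; apply/negP => lt_xy.
pose c := (phi x + phi y) / 2.
have [del del0 Hd] := usc x Kx (c - phi x) ltac:(rewrite /c; lra).
have FBc : filter_from D B (B c) by exists c => //; exists y => //; rewrite /c; lra.
have [w [[Kw cw] bw]] := clx _ _ FBc (nbhsx_ballx x del del0).
by have := Hd w Kw bw; lra.
Qed.

Definition fro_closed m n (S : set 'M[R]_(m, n)) :=
  forall y, (forall eps : R, 0 < eps -> exists2 w, S w & fro_norm (w - y) < eps) -> S y.

Definition fro_bounded m n (S : set 'M[R]_(m, n)) :=
  exists M : R, forall x, S x -> fro_norm x <= M.

Definition fro_usc_on m n (S : set 'M[R]_(m, n)) (phi : 'M[R]_(m, n) -> R) :=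
  forall y, S y -> forall e : R, 0 < e -> exists2 del : R, 0 < del &
    forall w, S w -> fro_norm (w - y) < del -> phi w < phi y + e.

Lemma fro_dist_vec_mx_le m n (v u : 'rV[R]_(m * n)) (d : R) :
  ball v d u -> fro_norm (vec_mx u - vec_mx v) <= (m * n)%:R * d.
Proof.
rewrite mx_norm_ball /ball_ => vu.
apply: fro_norm_le_entries => [|i j]; first exact: ltW (le_lt_trans (normr_ge0 _) vu).
rewrite -(vec_mxK u) -(vec_mxK v) !mxE !vec_mxK distrC; apply/ltW/(le_lt_trans _ vu).
rewrite [leRHS]mx_normrE.
have := @le_bigmax _ _ _ 0 (fun k : 'I_1 * 'I_(m * n) => `|(v - u) k.1 k.2|) (0, mxvec_index i j).
by rewrite /= !mxE.
Qed.

(* Compactness is borrowed from ['rV_(m * n)] through [vec_mx]; the max norm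
   there is within a factor [m * n] of the Frobenius norm. *)
Lemma fro_usc_max m n (K : set 'M[R]_(m, n)) (phi : 'M[R]_(m, n) -> R) :
  fro_bounded K -> fro_closed K -> K !=set0 -> fro_usc_on K phi ->
  exists2 x, K x & forall y, K y -> phi y <= phi x.
Proof.
move=> [M KM] Kcl [x0 Kx0] usc.
pose K' := [set v : 'rV[R]_(m * n) | K (vec_mx v)].
pose N : R := (m * n)%:R.
have N_ge0 : 0 <= N by rewrite ler0n.
have shrink eps : 0 < eps -> 0 < eps / (N + 1) /\ N * (eps / (N + 1)) < eps.
  move=> eps_gt0; have N1 : 0 < N + 1 by lra.
  by rewrite divr_gt0 // mulrA ltr_pdivrMr //; split => //; nra.
have cK' : compact K'.
  apply: bounded_closed_compact.
    exists M; split; first exact: num_real.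
    move=> M' MM' v Kv; rewrite /Num.norm /= mx_normrE; apply: bigmax_le.
      by apply: le_trans (ltW MM'); apply: le_trans (KM _ Kv); exact: fro_norm_ge0.
    move=> [i k] _ /=; rewrite (ord1 i); case: (mxvec_indexP k) => a b.
    rewrite -(vec_mxK v) mxvecE; apply: le_trans (fro_entry_le _ a b) _.
    exact: le_trans (KM _ Kv) (ltW MM').
  move=> v clv; apply: Kcl => eps /shrink[d_gt0 Nd_lt].
  have [u [Ku bu]] := clv _ (nbhsx_ballx v _ d_gt0).
  by exists (vec_mx u) => //; apply: le_lt_trans (fro_dist_vec_mx_le bu) Nd_lt.
have [v0 Kv0 v0_max] : exists2 v0, K' v0 & forall v, K' v -> phi (vec_mx v) <= phi (vec_mx v0).
  apply: compact_usc_max cK' _ _; first by exists (mxvec x0); rewrite /K' /= mxvecK.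
  move=> v Kv e /(usc _ Kv)[del del_gt0 Hdel].
  have [d_gt0 Nd_lt] := shrink _ del_gt0.
  exists (del / (N + 1)) => // w Kw bw; apply: Hdel Kw _.
  exact: le_lt_trans (fro_dist_vec_mx_le bw) Nd_lt.
exists (vec_mx v0) => // y Ky; have := v0_max (mxvec y); rewrite /K' /= mxvecK.
exact.
Qed.

End UpperSemicontinuousMaximum.

Lemma is_derive_eps_delta (R : realType) (phi : R -> R) (d t : R) :
  (forall eps, 0 < eps -> exists2 del, 0 < del &
    forall s, `|s| < del -> `|phi (t + s) - phi t - s * d| <= eps * `|s|) ->
  is_derive t 1 phi d.
Proof.
move=> H.
have : (fun s => s^-1 *: ((phi \o shift t) (s *: 1) - phi t)) @ 0^' --> d.
  apply/cvgrPdist_le => e e_gt0; have [del del_gt0 Hdel] := H e e_gt0.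
  rewrite near_withinE; exists del => //= s /=; rewrite sub0r normrN => /Hdel + s0.
  rewrite -[s%:A]/(s * 1) mulr1 => Hs; have s_gt0 : 0 < `|s| by rewrite normr_gt0.
  rewrite -(ler_pM2l s_gt0) -normrM -[_ *: _]/(_ * _) mulrBr mulrA mulfV // mul1r.
  by rewrite -normrN opprB mulrC (mulrC d) (addrC s) [leRHS]mulrC.
by move=> lim_d; apply: DeriveDef; [apply/cvg_ex; exists d | exact: cvg_lim].
Qed.

Section QuadraticTaylorBound.
Variables (R : realType) (phi phi' : R -> R) (K : R).
Hypothesis phi_der : forall t : R, 0 <= t <= 1 -> is_derive t (1 : R) phi (phi' t).
Hypothesis phi'_lip : forall t : R, 0 <= t <= 1 -> `|phi' t - phi' 0| <= K * t.

(* [psi] has derivative [c (phi' t - phi' 0) - K t <= 0], so it is nonincreasing on [0, 1]. *)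
Let signed_taylor_bound (c : R) : `|c| = 1 -> c * (phi 1 - phi 0 - phi' 0) <= K / 2.
Proof.
move=> c1; pose psi t := c * phi t - c * phi' 0 * t - K / 2 * t ^+ 2.
have psi_der (t : R) : 0 <= t <= 1 ->
    is_derive t (1 : R) psi (c * (phi' t - phi' 0) - K * t).
  move=> t01; have := phi_der t01 => ?; rewrite /psi; apply: is_derive_eq.
  change (c * phi' t - c * phi' 0 * 1 - K / 2 * (t * 1 + t * 1) =
          c * (phi' t - phi' 0) - K * t); by field.
have in01 (t : R) : t \in `]0, 1[%R -> 0 <= t <= 1.
  by rewrite in_itv => /andP[t0 t1]; rewrite !ltW.
have : psi 1 <= psi 0.
  apply: (@ler0_derive1_le_cc _ psi 0 1); rewrite ?in_itv /= ?lexx ?ler01 //.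
  - by move=> t /in01 /psi_der [].
  - move=> t /in01 t01; rewrite derive1E; have [_ ->] := psi_der t t01.
    have := ler_norm (c * (phi' t - phi' 0)); rewrite normrM c1 mul1r.
    by have := phi'_lip t01; lra.
  - by apply: derivable_within_continuous => t; rewrite in_itv => /psi_der [].
by rewrite /psi expr1n expr0n /= !mulr0 !mulr1 subr0; lra.
Qed.

Lemma quadratic_taylor_bound : `|phi 1 - phi 0 - phi' 0| <= K / 2.
Proof.
have := signed_taylor_bound (normr1 R); have := signed_taylor_bound (normrN1 R).
by rewrite ler_norml; lra.
Qed.

End QuadraticTaylorBound.

Lemma fro_dot_negligible_eq0 (R : realType) m n (a : 'M[R]_(m, n)) :
  (forall eps : R, 0 < eps -> exists2 del : R, 0 < del &
     forall v, fro_norm v < del -> `|fro_dot a v| <= eps * fro_norm v) -> a = 0.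
Proof.
move=> H; apply: fro_dot_eq0; rewrite -sqr_fro_norm.
suff -> : fro_norm a = 0 by rewrite expr0n.
apply/eqP; rewrite eq_le fro_norm_ge0 andbT; apply/ler_addgt0Pr => eps eps_gt0.
rewrite add0r; have [del del_gt0 Hdel] := H eps eps_gt0.
set na := fro_norm a; have na_ge0 : 0 <= na := fro_norm_ge0 a.
pose s := del / (na + 1); have s_gt0 : 0 < s by rewrite divr_gt0 //; lra.
have : fro_norm (s *: a) < del.
  rewrite fro_normZ gtr0_norm // /s mulrAC ltr_pdivrMr; last lra.
  by rewrite ltr_pM2l // -/na; lra.
move=> /Hdel; rewrite fro_dotZr fro_normZ normrM (gtr0_norm s_gt0) -sqr_fro_norm -/na.
rewrite (ger0_norm (sqr_ge0 _)) => sq_le.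
have : na * na <= eps * na by rewrite -(ler_pM2l s_gt0) -expr2 (mulrCA s eps).
have [->|na_neq0] := eqVneq na 0; first by move=> _; exact: ltW.
by rewrite ler_pM2r // lt_def na_neq0.
Qed.

Section Gradient.
Variables (R : realType) (m n k : nat).
Implicit Types (F : 'M[R]_(m, n) -> 'rV[R]_k -> R) (x d : 'M[R]_(m, n)) (y e : 'rV[R]_k).

Lemma is_grad_segment F gx gy x y d e (t : R) :
  is_grad F gx gy (x + t *: d) (y + t *: e) ->
  is_derive t (1 : R) (fun s => F (x + s *: d) (y + s *: e)) (fro_dot gx d + fro_dot gy e).
Proof.
move=> Fgrad; apply: is_derive_eps_delta => eps eps_gt0.
pose c := fro_norm d + fro_norm e + 1.
have c_gt0 : 0 < c by rewrite /c; have := fro_norm_ge0 d; have := fro_norm_ge0 e; lra.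
have [del del_gt0 Hdel] := Fgrad (eps / c) (divr_gt0 eps_gt0 c_gt0).
exists (del / c) => [|s]; first by rewrite divr_gt0.
rewrite ltr_pdivlMr // => s_lt; rewrite !scalerDl !addrA.
have : fro_norm (s *: d) + fro_norm (s *: e) < del.
  rewrite !fro_normZ -mulrDr; apply: le_lt_trans s_lt.
  by rewrite ler_wpM2l // /c lerDl.
rewrite mulrDr opprD addrA => /Hdel; rewrite !fro_dotZr !fro_normZ -mulrDr.
move=> /le_trans; apply; apply: (@le_trans _ _ (eps / c * (`|s| * c))).
  by rewrite ler_pM2l ?divr_gt0 // ler_wpM2l // /c lerDl.
by rewrite mulrCA divfK ?gt_eqF // mulrC.
Qed.

Lemma is_grad_continuous F gx gy x y : is_grad F gx gy x y ->
  forall e : R, 0 < e -> exists2 del : R, 0 < del &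
    forall u v, fro_norm u + fro_norm v < del -> `|F (x + u) (y + v) - F x y| < e.
Proof.
move=> Fgrad e e_gt0; have [d1 d1_gt0 Hd1] := Fgrad 1 ltr01.
pose G := fro_norm gx + fro_norm gy + 1.
have G_gt0 : 0 < G by rewrite /G; have := fro_norm_ge0 gx; have := fro_norm_ge0 gy; lra.
exists (Num.min d1 (e / G)) => [|u v]; first by rewrite lt_min d1_gt0 divr_gt0.
rewrite lt_min => /andP[/Hd1 + s_lt]; rewrite mul1r.
set s := fro_norm u + fro_norm v in s_lt *.
set r := F (x + u) (y + v) - F x y - fro_dot gx u - fro_dot gy v => r_le.
have -> : F (x + u) (y + v) - F x y = r + fro_dot gx u + fro_dot gy v by rewrite /r; ring.
have u_le : fro_norm gx * fro_norm u <= fro_norm gx * s.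
  by apply: ler_wpM2l; rewrite ?fro_norm_ge0 // /s lerDl fro_norm_ge0.
have v_le : fro_norm gy * fro_norm v <= fro_norm gy * s.
  by apply: ler_wpM2l; rewrite ?fro_norm_ge0 // /s lerDr fro_norm_ge0.
have Gs_lt : G * s < e by rewrite mulrC -ltr_pdivlMr.
have GsE : G * s = fro_norm gx * s + fro_norm gy * s + s by rewrite /G; ring.
have := fro_cauchy_schwarz gx u; have := fro_cauchy_schwarz gy v.
have := ler_normD (r + fro_dot gx u) (fro_dot gy v); have := ler_normD r (fro_dot gx u).
lra.
Qed.

Lemma is_grad_add_prox F gx gy x y (p : R) (z : 'M[R]_(m, n)) : is_grad F gx gy x y ->
  is_grad (fun x y => F x y + p / 2 * fro_norm (x - z) ^+ 2) (gx + p *: (x - z)) gy x y.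
Proof.
move=> Fgrad eps eps_gt0.
have [del del_gt0 Hdel] := Fgrad (eps / 2) (divr_gt0 eps_gt0 (ltr0Sn _ 1)).
have p1_gt0 : 0 < `|p| + 1 by rewrite ltr_wpDl.
exists (Num.min del (eps / (`|p| + 1))) => [|u v]; first by rewrite lt_min del_gt0 divr_gt0.
rewrite lt_min => /andP[/Hdel + s_lt].
set s := fro_norm u + fro_norm v in s_lt *.
set r := F (x + u) (y + v) - F x y - fro_dot gx u - fro_dot gy v => r_le.
rewrite [x + u - z]addrAC (fro_norm_sqrD (x - z) u) (fro_dotDl gx) fro_dotZl.
have -> : F (x + u) (y + v) + p / 2 * (fro_norm (x - z) ^+ 2 + 2 * fro_dot (x - z) u +
    fro_norm u ^+ 2) - (F x y + p / 2 * fro_norm (x - z) ^+ 2) -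
    (fro_dot gx u + p * fro_dot (x - z) u) - fro_dot gy v = r + p / 2 * fro_norm u ^+ 2.
  by rewrite /r; field.
have u_le : fro_norm u <= s by rewrite /s lerDl fro_norm_ge0.
have pu_le : `|p| * fro_norm u <= eps.
  have : `|p| * fro_norm u <= `|p| * s by rewrite ler_wpM2l.
  have := fro_norm_ge0 u; have := fro_norm_ge0 v.
  rewrite ltr_pdivlMr // /s in s_lt *; lra.
have pu2_le : `|p| * fro_norm u * fro_norm u <= eps * s.
  apply: (@le_trans _ _ (eps * fro_norm u)); first by rewrite ler_wpM2r ?fro_norm_ge0.
  by apply: ler_wpM2l => //; exact: ltW.
have := ler_normD r (p / 2 * fro_norm u ^+ 2).
rewrite !normrM normfV (ger0_norm (fro_norm_ge0 u)) (@ger0_norm _ 2) //.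
lra.
Qed.

Lemma is_grad_min_dir F gx gy x y d : is_grad F gx gy x y ->
  (forall t : R, 0 < t <= 1 -> F x y <= F (x + t *: d) y) -> 0 <= fro_dot gx d.
Proof.
move=> Fgrad Fmin; rewrite leNgt; apply/negP; set a := fro_dot gx d => a_lt0.
pose c := fro_norm d + 1.
have c_gt0 : 0 < c by rewrite /c; have := fro_norm_ge0 d; lra.
have eps_gt0 : 0 < - a / (2 * c) by rewrite divr_gt0 ?oppr_gt0 ?mulr_gt0.
have [del del_gt0 Hdel] := Fgrad _ eps_gt0.
pose t := Num.min 1 (del / (2 * c)).
have t_gt0 : 0 < t by rewrite lt_min ltr01 divr_gt0 ?mulr_gt0.
have t_le1 : t <= 1 by rewrite ge_min lexx.
have td_le : t * fro_norm d <= t * c by apply: ler_wpM2l; [exact: ltW | rewrite /c lerDl].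
have tc_le : t * (2 * c) <= del by rewrite -ler_pdivlMr ?mulr_gt0 // ge_min lexx orbT.
have : fro_norm (t *: d) + fro_norm (0 : 'rV[R]_k) < del.
  by rewrite fro_norm0 addr0 fro_normZ gtr0_norm //; lra.
move=> /Hdel; rewrite addr0 fro_dotZr fro_dot0r subr0 fro_normZ fro_norm0 addr0.
rewrite (gtr0_norm t_gt0) ler_norml -/a => /andP[_ Fx_le].
have eps_td : - a / (2 * c) * (t * fro_norm d) <= - a * t / 2.
  have -> : - a * t / 2 = - a / (2 * c) * (t * c) by field; rewrite gt_eqF.
  by apply: ler_wpM2l; [exact: ltW | exact: td_le].
have := Fmin t; rewrite t_gt0 t_le1 => /(_ isT).
have : 0 < t * - a by rewrite mulr_gt0 ?oppr_gt0.
lra.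
Qed.

Lemma is_grad_y_unique F F' gx gy gx' gy' x x' y :
  is_grad F gx gy x y -> is_grad F' gx' gy' x' y ->
  (forall v, F x (y + v) - F x y = F' x' (y + v) - F' x' y) -> gy = gy'.
Proof.
move=> Fgrad F'grad dF; apply/eqP; rewrite -subr_eq0; apply/eqP.
apply: fro_dot_negligible_eq0 => eps eps_gt0.
have eps2_gt0 : 0 < eps / 2 by rewrite divr_gt0.
have [d1 d1_gt0 Hd1] := Fgrad _ eps2_gt0; have [d2 d2_gt0 Hd2] := F'grad _ eps2_gt0.
exists (Num.min d1 d2) => [|v]; first by rewrite lt_min d1_gt0.
rewrite lt_min => /andP[v1 v2].
have := Hd1 0 v; have := Hd2 0 v; rewrite fro_norm0 add0r addr0 => /(_ v2) + /(_ v1).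
rewrite !fro_dot0r !subr0 addr0 dF fro_dotBl !ler_norml; lra.
Qed.

End Gradient.

Definition is_convex_set (R : realType) m n (S : set 'M[R]_(m, n)) :=
  forall x1 x2 (t : R), S x1 -> S x2 -> 0 <= t <= 1 -> S (x1 + t *: (x2 - x1)).

Section Descent.
Variables (R : realType) (m n k : nat).
Variables (X : set 'M[R]_(m, n)) (Y : set 'rV[R]_k).
Variables (F : 'M[R]_(m, n) -> 'rV[R]_k -> R) (gx : 'M[R]_(m, n) -> 'rV[R]_k -> 'M[R]_(m, n))
  (gy : 'M[R]_(m, n) -> 'rV[R]_k -> 'rV[R]_k) (l : R).
Hypotheses (X_convex : is_convex_set X) (Y_convex : is_convex_set Y).
Hypothesis F_grad : forall x y, X x -> Y y -> is_grad F (gx x y) (gy x y) x y.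
Hypothesis gx_lip : forall x1 y1 x2 y2, X x1 -> Y y1 -> X x2 -> Y y2 ->
  fro_norm (gx x1 y1 - gx x2 y2) <= l * fro_norm (x1 - x2) + l * fro_norm (y1 - y2).
Hypothesis gy_lip : forall x1 y1 x2 y2, X x1 -> Y y1 -> X x2 -> Y y2 ->
  fro_norm (gy x1 y1 - gy x2 y2) <= l * fro_norm (x1 - x2) + l * fro_norm (y1 - y2).

Lemma descent_lemma x y x' y' : X x -> Y y -> X x' -> Y y' ->
  `|F x' y' - F x y - fro_dot (gx x y) (x' - x) - fro_dot (gy x y) (y' - y)|
    <= l / 2 * (fro_norm (x' - x) + fro_norm (y' - y)) ^+ 2.
Proof.
move=> Xx Yy Xx' Yy'; set d := x' - x; set e := y' - y; set N := fro_norm d + fro_norm e.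
have seg (t : R) : 0 <= t <= 1 -> X (x + t *: d) /\ Y (y + t *: e).
  by move=> t01; split; [exact: X_convex | exact: Y_convex].
have [nd_ge0 ne_ge0] := (fro_norm_ge0 d, fro_norm_ge0 e).
pose phi s := F (x + s *: d) (y + s *: e).
pose phi' t := fro_dot (gx (x + t *: d) (y + t *: e)) d + fro_dot (gy (x + t *: d) (y + t *: e)) e.
have phi_der (t : R) : 0 <= t <= 1 -> is_derive t (1 : R) phi (phi' t).
  by move=> /seg[Xt Yt]; exact: is_grad_segment (F_grad Xt Yt).
have phi'_lip (t : R) : 0 <= t <= 1 -> `|phi' t - phi' 0| <= l * N ^+ 2 * t.
  move=> t01; have [Xt Yt] := seg t t01; have [t_ge0 _] := andP t01.
  have dx : x + t *: d - x = t *: d by rewrite addrC addKr.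
  have dy : y + t *: e - y = t *: e by rewrite addrC addKr.
  have := gx_lip Xt Yt Xx Yy; have := gy_lip Xt Yt Xx Yy.
  rewrite dx dy !fro_normZ ger0_norm // /phi' !scale0r !addr0.
  set a := gx _ _ - gx x y; set b := gy _ _ - gy x y => b_le a_le.
  have -> : fro_dot (gx (x + t *: d) (y + t *: e)) d + fro_dot (gy (x + t *: d) (y + t *: e)) e
    - (fro_dot (gx x y) d + fro_dot (gy x y) e) = fro_dot a d + fro_dot b e.
    by rewrite !fro_dotBl; ring.
  apply: le_trans (ler_normD _ _) _.
  have := fro_cauchy_schwarz a d; have := fro_cauchy_schwarz b e.
  have := ler_wpM2r nd_ge0 a_le; have := ler_wpM2r ne_ge0 b_le.
  have : l * N ^+ 2 * t = (l * (t * fro_norm d) + l * (t * fro_norm e)) * fro_norm d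
    + (l * (t * fro_norm d) + l * (t * fro_norm e)) * fro_norm e by rewrite /N; ring.
  lra.
have := quadratic_taylor_bound phi_der phi'_lip.
by rewrite /phi /phi' !scale1r !scale0r !addr0 /d /e !subrKC opprD addrA mulrAC.
Qed.

Lemma descent_x x x' y : X x -> X x' -> Y y ->
  `|F x' y - F x y - fro_dot (gx x y) (x' - x)| <= l / 2 * fro_norm (x' - x) ^+ 2.
Proof.
move=> Xx Xx' Yy; have := descent_lemma Xx Yy Xx' Yy.
by rewrite subrr fro_norm0 fro_dot0r subr0 addr0.
Qed.

Lemma descent_y x y y' : X x -> Y y -> Y y' ->
  `|F x y' - F x y - fro_dot (gy x y) (y' - y)| <= l / 2 * fro_norm (y' - y) ^+ 2.
Proof.
move=> Xx Yy Yy'; have := descent_lemma Xx Yy Xx Yy'.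
by rewrite subrr fro_norm0 fro_dot0r subr0 add0r.
Qed.

Variables (p : R) (z : 'M[R]_(m, n)).
Let G x y := F x y + p / 2 * fro_norm (x - z) ^+ 2.

(* First-order optimality of [xs] plus the descent bound: the proximal term
   makes [G] strongly convex in [x]. *)
Lemma prox_quadratic_growth xs y : X xs -> Y y -> (forall x, X x -> G xs y <= G x y) ->
  forall x, X x -> G xs y + (p - l) / 2 * fro_norm (x - xs) ^+ 2 <= G x y.
Proof.
move=> Xxs Yy xs_min x Xx; set d := x - xs.
have first_order : 0 <= fro_dot (gx xs y + p *: (xs - z)) d.
  apply: is_grad_min_dir (is_grad_add_prox p z (F_grad Xxs Yy)) _ => t /andP[t_gt0 t_le1].
  by apply: xs_min; apply: X_convex => //; rewrite (ltW t_gt0).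
have := descent_x Xxs Xx Yy; rewrite ler_norml -/d => /andP[lower _].
rewrite /G (_ : x - z = (xs - z) + d); last by rewrite /d [RHS]addrC addrA subrK.
rewrite (fro_norm_sqrD (xs - z) d); rewrite fro_dotDl fro_dotZl in first_order; lra.
Qed.

End Descent.

Section ExtendedMinimax.
Variable R : realType.
Local Open Scope ereal_scope.

Lemma ereal_inf_attained T (S : set T) (phi : T -> \bar R) x0 :
  S x0 -> (forall x, S x -> phi x0 <= phi x) -> phi x0 = ereal_inf (phi @` S).
Proof.
move=> Sx0 x0_min; apply/eqP; rewrite eq_le; apply/andP; split.
  by apply: le_ereal_inf_tmp => _ [x Sx <-]; exact: x0_min.
by apply: ereal_inf_lbound; exists x0.
Qed.

Lemma ereal_sup_attained T (S : set T) (phi : T -> \bar R) x0 :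
  S x0 -> (forall x, S x -> phi x <= phi x0) -> phi x0 = ereal_sup (phi @` S).
Proof.
move=> Sx0 x0_max; apply/eqP; rewrite eq_le; apply/andP; split.
  by apply: ereal_sup_ubound; exists x0.
by apply: ge_ereal_sup => _ [x Sx <-]; exact: x0_max.
Qed.

Variables (T U : Type) (S : set T) (V : set U) (F : T -> U -> \bar R) (xs : T) (ys : U).
Hypotheses (Sxs : S xs) (Vys : V ys).
Hypothesis xs_min : forall x, S x -> F xs ys <= F x ys.
Hypothesis ys_max : forall y, V y -> F xs y <= F xs ys.

Lemma saddle_point_minimax :
  [/\ min_attained S (fun x => ereal_sup [set F x y | y in V]),
      max_attained V (fun y => ereal_inf [set F x y | x in S]) &
      ereal_inf [set ereal_sup [set F x y | y in V] | x in S]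
        = ereal_sup [set ereal_inf [set F x y | x in S] | y in V]].
Proof.
have sup_xs : ereal_sup [set F xs y | y in V] = F xs ys.
  by rewrite -(ereal_sup_attained Vys ys_max).
have inf_ys : ereal_inf [set F x ys | x in S] = F xs ys.
  by rewrite -(ereal_inf_attained Sxs xs_min).
pose Phi x := ereal_sup [set F x y | y in V].
pose Psi y := ereal_inf [set F x y | x in S].
have min_Phi : Phi xs = ereal_inf (Phi @` S).
  apply: ereal_inf_attained Sxs _ => x Sx; rewrite /Phi sup_xs.
  by apply: le_trans (xs_min Sx) _; apply: ereal_sup_ubound; exists ys.
have max_Psi : Psi ys = ereal_sup (Psi @` V).
  apply: ereal_sup_attained Vys _ => y Vy; rewrite /Psi inf_ys.
  by apply: le_trans (ys_max Vy); apply: ereal_inf_lbound; exists xs.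
split; [by exists xs | by exists ys |].
by rewrite -min_Phi -max_Psi /Phi /Psi sup_xs inf_ys.
Qed.

End ExtendedMinimax.

Lemma frechet_subdiff_of_minorant (R : realType) k (h : 'rV[R]_k -> \bar R) y v (Q : R) :
  h y \is a fin_num ->
  (forall w, ((fine (h y) + fro_dot v (w - y) - Q * fro_norm (w - y) ^+ 2)%:E <= h w)%E) ->
  frechet_subdiff h y v.
Proof.
move=> hy_fin minor; split => // eps eps_gt0.
have Q1_gt0 : 0 < `|Q| + 1 by rewrite ltr_wpDl.
exists (eps / (`|Q| + 1)) => [|w]; first by rewrite divr_gt0.
rewrite ltr_pdivlMr // => w_lt; apply: le_trans (minor w); rewrite lee_fin lerD2l lerN2.
set b := fro_norm (w - y) in w_lt *; have b_ge0 : 0 <= b := fro_norm_ge0 _.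
have : Q * b ^+ 2 <= `|Q| * b * b by rewrite -mulrA -expr2 ler_wpM2r ?sqr_ge0 ?ler_norm.
have : `|Q| * b * b <= eps * b.
  by apply: ler_wpM2r => //; lra.
lra.
Qed.

Section ProperDomain.
Variables (R : realType) (k : nat) (h : 'rV[R]_k -> \bar R).
Hypothesis h_proper : proper_fun h.

Lemma dom_fin_num y : dom h y -> h y \is a fin_num.
Proof. by move=> hy; rewrite fin_numE h_proper.1 /= lt_eqF. Qed.

Lemma dom_fineK y : dom h y -> h y = (fine (h y))%:E.
Proof. by move=> /dom_fin_num/fineK. Qed.

Lemma notin_dom_pinfty y : ~ dom h y -> h y = +oo%E.
Proof.
by move=> /negP; rewrite /dom /= -leNgt leye_eq => /eqP.
Qed.

End ProperDomain.

Section ProximalSaddle.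
Variables (R : realType) (m n k : nat) (X : set 'M[R]_(m, n)) (h : 'rV[R]_k -> \bar R).
Variables (F : 'M[R]_(m, n) -> 'rV[R]_k -> R) (gx : 'M[R]_(m, n) -> 'rV[R]_k -> 'M[R]_(m, n))
  (gy : 'M[R]_(m, n) -> 'rV[R]_k -> 'rV[R]_k) (l p : R) (z : 'M[R]_(m, n)).
Hypotheses (X_convex : is_convex_set X) (X_closed : fro_closed X)
  (X_bounded : fro_bounded X) (X_nonempty : X !=set0).
Hypotheses (h_proper : proper_fun h) (h_lsc : lsc h) (Y_convex : is_convex_set (dom h))
  (Y_closed : fro_closed (dom h)) (Y_bounded : fro_bounded (dom h)).
Hypothesis F_grad : forall x y, X x -> dom h y -> is_grad F (gx x y) (gy x y) x y.
Hypothesis gx_lip : forall x1 y1 x2 y2, X x1 -> dom h y1 -> X x2 -> dom h y2 ->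
  fro_norm (gx x1 y1 - gx x2 y2) <= l * fro_norm (x1 - x2) + l * fro_norm (y1 - y2).
Hypothesis gy_lip : forall x1 y1 x2 y2, X x1 -> dom h y1 -> X x2 -> dom h y2 ->
  fro_norm (gy x1 y1 - gy x2 y2) <= l * fro_norm (x1 - x2) + l * fro_norm (y1 - y2).
Hypothesis lt_lp : l < p.
Hypothesis stationary_max : forall x y, X x -> dom h y -> frechet_subdiff h y (gy x y) ->
  forall w, dom h w -> F x w - fine (h w) <= F x y - fine (h y).

Let G x y := F x y + p / 2 * fro_norm (x - z) ^+ 2.
Let Gr x y := ((G x y)%:E - h y)%E.

Lemma Gr_dom x y : dom h y -> Gr x y = (G x y - fine (h y))%:E.
Proof. by move=> hy; rewrite /Gr (dom_fineK h_proper hy). Qed.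

Lemma Gr_notin_dom x y : ~ dom h y -> Gr x y = -oo%E.
Proof. by move=> hy; rewrite /Gr (notin_dom_pinfty hy). Qed.

Lemma G_continuous x y : X x -> dom h y -> forall e : R, 0 < e -> exists2 del : R, 0 < del &
  forall x' y', fro_norm (x' - x) + fro_norm (y' - y) < del -> `|G x' y' - G x y| < e.
Proof.
move=> Xx hy e /(is_grad_continuous (is_grad_add_prox p z (F_grad Xx hy)))[del del_gt0 Hdel].
by exists del => // x' y' /Hdel; rewrite !subrKC.
Qed.

Lemma G_argmin y : dom h y -> exists2 x, X x & forall x', X x' -> G x y <= G x' y.
Proof.
move=> hy; have [x Xx x_max] : exists2 x, X x & forall x', X x' -> - G x' y <= - G x y.
  apply: fro_usc_max => // x Xx e /(G_continuous Xx hy)[del del_gt0 Hdel].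
  exists del => // x' _ xx'; have := Hdel x' y; rewrite subrr fro_norm0 addr0.
  by move=> /(_ xx'); rewrite ltr_norml; lra.
by exists x => // x' /x_max; rewrite lerN2.
Qed.

Lemma G_argmin_fun : exists xm : 'rV[R]_k -> 'M[R]_(m, n), forall y,
  X (xm y) /\ (dom h y -> forall x, X x -> G (xm y) y <= G x y).
Proof.
suff /choice[xm xmP] : forall y, exists x,
    X x /\ (dom h y -> forall x', X x' -> G x y <= G x' y) by exists xm.
move=> y; have [hy|hy] := pselect (dom h y); last by have [x0 Xx0] := X_nonempty; exists x0.
by have [x Xx x_min] := G_argmin hy; exists x.
Qed.

Lemma fro_usc_on_sub_h (phi : 'rV[R]_k -> R) :
  (forall y, dom h y -> exists2 x0, X x0 &
     phi y = G x0 y /\ forall w, dom h w -> phi w <= G x0 w) ->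
  fro_usc_on (dom h) (fun w => phi w - fine (h w)).
Proof.
move=> touch y hy e e_gt0; have [x0 Xx0 [phi_y phi_le]] := touch y hy.
have [d1 d1_gt0 Hd1] := G_continuous Xx0 hy (divr_gt0 e_gt0 (ltr0Sn _ 1)).
have hy_gt : ((fine (h y) - e / 2)%:E < h y)%E.
  by rewrite [E in (_ < E)%E](dom_fineK h_proper hy) lte_fin; lra.
have [d2 d2_gt0 Hd2] := h_lsc hy_gt.
exists (Num.min d1 d2) => [|w hw]; first by rewrite lt_min d1_gt0.
rewrite lt_min => /andP[w1 /Hd2]; rewrite (dom_fineK h_proper hw) lte_fin.
have := Hd1 x0 w; rewrite subrr fro_norm0 add0r => /(_ w1); rewrite ltr_norml.
by have := phi_le w hw; rewrite phi_y; lra.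
Qed.

Lemma Gr_max_attained x : X x -> max_attained setT (Gr x).
Proof.
move=> Xx; have [y hy y_max] : exists2 y, dom h y &
    forall w, dom h w -> G x w - fine (h w) <= G x y - fine (h y).
  apply: fro_usc_max Y_bounded Y_closed h_proper.2 (fro_usc_on_sub_h _) => y hy.
  by exists x.
exists y => //; apply: ereal_sup_attained => // w _.
have [hw|hw] := pselect (dom h w); last by rewrite Gr_notin_dom ?leNye.
by rewrite !Gr_dom // lee_fin y_max.
Qed.

Lemma Gr_min_attained y : min_attained X (Gr^~ y).
Proof.
have [hy|hy] := pselect (dom h y).
  have [x Xx x_min] := G_argmin hy; exists x => //.
  apply: (ereal_inf_attained (phi := Gr^~ y)) => // x' Xx'.
  by rewrite !Gr_dom // lee_fin lerD2r x_min.
have [x0 Xx0] := X_nonempty; exists x0 => //.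
by apply: (ereal_inf_attained (phi := Gr^~ y)) => // x' _; rewrite !Gr_notin_dom.
Qed.

(* Moving [y] from [ys] to [w] moves the minimizer by [a = |xm w - xm ys|];
   the quadratic growth [c a^2] of [G (.) ys] absorbs the cross term [L a b]
   (AM-GM), leaving a quadratic minorant of [h] at [ys] with slope [gy xs ys]. *)
Lemma value_argmax_subgradient (xm : 'rV[R]_k -> 'M[R]_(m, n)) ys :
  (forall y, X (xm y) /\ (dom h y -> forall x, X x -> G (xm y) y <= G x y)) -> dom h ys ->
  (forall y, dom h y -> G (xm y) y - fine (h y) <= G (xm ys) ys - fine (h ys)) ->
  frechet_subdiff h ys (gy (xm ys) ys).
Proof.
move=> xmP hys ys_max; set xs := xm ys; have [Xxs /(_ hys) xs_min] := xmP ys.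
set c := (p - l) / 2; have c_gt0 : 0 < c by rewrite /c divr_gt0 // subr_gt0.
set L := `|l|; set K := L ^+ 2 / (4 * c).
apply: (@frechet_subdiff_of_minorant _ _ _ _ _ (K + L / 2)).
  exact: (dom_fin_num h_proper hys).
move=> w; have [hw|hw] := pselect (dom h w); last by rewrite (notin_dom_pinfty hw) leey.
rewrite [E in (_ <= E)%E](dom_fineK h_proper hw) lee_fin.
have [Xxw _] := xmP w; set xw := xm w.
set a := fro_norm (xw - xs); set b := fro_norm (w - ys).
have [a_ge0 b_ge0] := (fro_norm_ge0 (xw - xs), fro_norm_ge0 (w - ys)).
have value_le := ys_max w hw.
have growth := prox_quadratic_growth X_convex Y_convex F_grad gx_lip gy_lip Xxs hys xs_min Xxw.
have := descent_y X_convex Y_convex F_grad gx_lip gy_lip Xxw hys hw.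
rewrite ler_norml -/b => /andP[descent _].
have lip := gy_lip Xxw hys Xxs hys; rewrite subrr fro_norm0 mulr0 addr0 -/a in lip.
have := fro_cauchy_schwarz (gy xw ys - gy xs ys) (w - ys).
rewrite fro_dotBl -/b ler_norml => /andP[cs _].
have dot_le : fro_norm (gy xw ys - gy xs ys) * b <= L * a * b.
  by apply: le_trans (ler_wpM2r b_ge0 lip) _; rewrite -!mulrA ler_wpM2r ?mulr_ge0 ?ler_norm.
have sq_le : l / 2 * b ^+ 2 <= L / 2 * b ^+ 2 by rewrite ler_wpM2r ?sqr_ge0 ?ler_pM2r ?ler_norm.
have amgm : - (K * b ^+ 2) <= c * a ^+ 2 - L * a * b.
  have : 0 <= c * (a - L * b / (2 * c)) ^+ 2 by rewrite mulr_ge0 ?sqr_ge0 ?ltW.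
  have -> : c * (a - L * b / (2 * c)) ^+ 2 = c * a ^+ 2 - L * a * b + K * b ^+ 2.
    by rewrite /K; field; rewrite gt_eqF.
  lra.
rewrite /G /c -/xs -/xw -/a in value_le growth amgm descent; lra.
Qed.

Lemma prox_saddle_point : exists2 xs, X xs & exists2 ys, dom h ys &
  (forall x, X x -> (Gr xs ys <= Gr x ys)%E) /\ (forall y, (Gr xs y <= Gr xs ys)%E).
Proof.
have [xm xmP] := G_argmin_fun.
have [ys hys ys_max] : exists2 ys, dom h ys &
    forall y, dom h y -> G (xm y) y - fine (h y) <= G (xm ys) ys - fine (h ys).
  apply: fro_usc_max Y_bounded Y_closed h_proper.2 (fro_usc_on_sub_h _) => y hy.
  have [Xxy xy_min] := xmP y; exists (xm y) => //; split=> // w hw.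
  by have [Xxw /(_ hw) /(_ _ Xxy)] := xmP w.
have ys_sub := value_argmax_subgradient xmP hys ys_max.
have [Xxs /(_ hys) xs_min] := xmP ys.
exists (xm ys) => //; exists ys => //; split=> [x Xx|y].
  by rewrite !Gr_dom // lee_fin lerD2r xs_min.
have [hy|hy] := pselect (dom h y); last by rewrite Gr_notin_dom ?leNye.
by rewrite !Gr_dom // lee_fin /G; have := stationary_max Xxs hys ys_sub hy; lra.
Qed.

Lemma inf_G_sub_h y :
  (ereal_inf [set (G x y)%:E | x in X] - h y)%E = ereal_inf [set Gr x y | x in X].
Proof.
have [hy|hy] := pselect (dom h y); last first.
  have [x0 Xx0] := X_nonempty; rewrite (notin_dom_pinfty hy) addeNy -(Gr_notin_dom x0 hy).
  by apply: (ereal_inf_attained (phi := Gr^~ y)) => // x _; rewrite !Gr_notin_dom.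
have [x Xx x_min] := G_argmin hy.
rewrite -(ereal_inf_attained (phi := fun x => (G x y)%:E) Xx); last first.
  by move=> x' Xx'; rewrite lee_fin x_min.
apply: (ereal_inf_attained (phi := Gr^~ y)) => // x' Xx'.
by rewrite !Gr_dom // lee_fin lerD2r x_min.
Qed.

Theorem prox_minimax :
  (forall x, X x -> max_attained setT (Gr x)) /\
  (forall y, min_attained X (Gr^~ y)) /\
  min_attained X (fun x => ereal_sup [set Gr x y | y in setT]) /\
  max_attained setT (fun y => ereal_inf [set Gr x y | x in X]) /\
  ereal_inf [set ereal_sup [set Gr x y | y in setT] | x in X]
    = ereal_sup [set ereal_inf [set Gr x y | x in X] | y in setT] /\
  (forall y, (ereal_inf [set (G x y)%:E | x in X] - h y)%E = ereal_inf [set Gr x y | x in X]).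
Proof.
have [xs Xxs [ys _ [xs_min ys_max]]] := prox_saddle_point.
have [minPhi maxPsi minimax] := @saddle_point_minimax R _ _ X setT Gr xs ys Xxs I xs_min
  (fun y _ => ys_max y).
split; first exact: Gr_max_attained.
split; first exact: Gr_min_attained.
by do 3!split=> //; exact: inf_G_sub_h.
Qed.

End ProximalSaddle.

Lemma fro_ball_convex (R : realType) m n (C : R) : is_convex_set (@Xset R m n C).
Proof.
move=> x1 x2 t; rewrite /Xset /= => Cx1 Cx2 /andP[t_ge0 t_le1].
have -> : x1 + t *: (x2 - x1) = (1 - t) *: x1 + t *: x2.
  by apply/matrixP => i j; rewrite !mxE; ring.
apply: le_trans (fro_normD _ _) _; rewrite !fro_normZ !ger0_norm ?subr_ge0 //.
have := ler_wpM2l t_ge0 Cx2; have : (1 - t) * fro_norm x1 <= (1 - t) * C.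
  by rewrite ler_wpM2l // subr_ge0.
lra.
Qed.

Lemma fro_ball_closed (R : realType) m n (C : R) : fro_closed (@Xset R m n C).
Proof.
move=> y y_adh; rewrite /Xset /=; apply/ler_addgt0Pr => e /y_adh[w Cw wy].
by have := fro_normD w (y - w); rewrite subrKC fro_distC; move: Cw; rewrite /Xset /=; lra.
Qed.

Lemma weakly_convex_dom_convex (R : realType) k (zeta : R) (h : 'rV[R]_k -> \bar R) :
  proper_fun h -> weakly_convex zeta h -> is_convex_set (dom h).
Proof.
move=> h_proper h_wcvx y1 y2 t hy1 hy2 t01; have := h_wcvx y2 y1 t t01.
have -> : t *: y2 + (1 - t) *: y1 = y1 + t *: (y2 - y1).
  by apply/matrixP => i j; rewrite !mxE; ring.
rewrite (dom_fineK h_proper hy1) (dom_fineK h_proper hy2) -!EFinD.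
by rewrite /dom /=; case: (h _) => [a| |] //= _; rewrite ltry.
Qed.

Lemma ftilde_stationary_max (R : realType) d1 r d2 (C rho mu : R)
  (f : 'M[R]_(d1, r) -> 'rV[R]_d2 -> R) (gfx : 'M[R]_(d1, r) -> 'rV[R]_d2 -> 'M[R]_(d1, r))
  (gfy gty : 'M[R]_(d1, r) -> 'rV[R]_d2 -> 'rV[R]_d2)
  (gtx : 'M[R]_(d1, r) -> 'rV[R]_d2 -> 'M[R]_(d1, r)) (h : 'rV[R]_d2 -> \bar R) :
  proper_fun h ->
  (forall x y, Xbar C x -> dom h y -> is_grad f (gfx x y) (gfy x y) x y) ->
  (forall x y, Xbar C x -> dom h y ->
     forall v, frechet_subdiff h y v ->
       forall w, ((f x w)%:E - h w - ((f x y)%:E - h y)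
                  <= (fro_norm (v - gfy x y) ^+ 2 / (2 * mu))%:E)%E) ->
  (forall x y, Xset C x -> dom h y -> is_grad (ftilde f rho) (gtx x y) (gty x y) x y) ->
  forall x y, Xset C x -> dom h y -> frechet_subdiff h y (gty x y) ->
  forall w, dom h w -> ftilde f rho x w - fine (h w) <= ftilde f rho x y - fine (h y).
Proof.
move=> h_proper f_grad f_PL ft_grad x y Cx hy y_sub w hw.
have CAx : Xbar C (Amap x) by exists x.
have gty_eq : gty x y = gfy (Amap x) y.
  by apply: is_grad_y_unique (ft_grad _ _ Cx hy) (f_grad _ _ CAx hy) _ => v; rewrite /ftilde; ring.
have := f_PL _ _ CAx hy _ y_sub w; rewrite -gty_eq subrr fro_norm0 expr0n /= mul0r.
by rewrite (dom_fineK h_proper hw) (dom_fineK h_proper hy) -!EFinB lee_fin /ftilde; lra.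
Qed.

(* [normedtype] also defines [bounded_set]; the statement below means the one of [Defs]. *)
Import Defs.

Theorem lemma7 (R : realType) (d1 r d2 : nat)
  (C rho p l mu zeta Lxx Lxy Lyx Lyy : R)
  (f : 'M[R]_(d1, r) -> 'rV[R]_d2 -> R)
  (gfx : 'M[R]_(d1, r) -> 'rV[R]_d2 -> 'M[R]_(d1, r))
  (gfy : 'M[R]_(d1, r) -> 'rV[R]_d2 -> 'rV[R]_d2)
  (gtx : 'M[R]_(d1, r) -> 'rV[R]_d2 -> 'M[R]_(d1, r))
  (gty : 'M[R]_(d1, r) -> 'rV[R]_d2 -> 'rV[R]_d2)
  (h : 'rV[R]_d2 -> \bar R) :
  (* C > 1/2 + sup_{x in M} ||x|| *)
  1 / 2 < C ->
  (forall x : 'M[R]_(d1, r), x^T *m x = 1%:M -> 1 / 2 + fro_norm x < C) ->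
  (* (A1) *)
  proper_fun h -> lsc h -> weakly_convex zeta h ->
  closed_set (dom h) -> locally_lipschitz_on h (dom h) -> bounded_set (dom h) ->
  (* (A2): f differentiable on an open set containing Xbar x Y, with gradients gfx, gfy *)
  (exists2 U : set ('M[R]_(d1, r) * 'rV[R]_d2), open_pair U &
     (forall x y, Xbar C x -> dom h y -> U (x, y)) /\
     (forall x y, U (x, y) -> is_grad f (gfx x y) (gfy x y) x y)) ->
  (forall x1 y1 x2 y2, Xbar C x1 -> dom h y1 -> Xbar C x2 -> dom h y2 ->
     fro_norm (gfx x1 y1 - gfx x2 y2)
       <= Lxx * fro_norm (x1 - x2) + Lxy * fro_norm (y1 - y2)) ->
  (forall x1 y1 x2 y2, Xbar C x1 -> dom h y1 -> Xbar C x2 -> dom h y2 ->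
     fro_norm (gfy x1 y1 - gfy x2 y2)
       <= Lyx * fro_norm (x1 - x2) + Lyy * fro_norm (y1 - y2)) ->
  (* (A3): PL-type condition, with dist(0, -grad_y f + dh(y)) written out as an infimum *)
  0 < mu ->
  (forall x y, Xbar C x -> dom h y ->
     forall v, frechet_subdiff h y v ->
       forall w, ((f x w)%:E - h w - ((f x y)%:E - h y)
                  <= (fro_norm (v - gfy x y) ^+ 2 / (2 * mu))%:E)%E) ->
  (* rho > 0; gtx, gty are the gradients of ftilde on X x Y; l a blockwise
     Lipschitz constant of them on X x Y; p > l *)
  0 < rho ->
  (forall x y, Xset C x -> dom h y ->
     is_grad (ftilde f rho) (gtx x y) (gty x y) x y) ->
  (forall x1 y1 x2 y2, Xset C x1 -> dom h y1 -> Xset C x2 -> dom h y2 ->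
     fro_norm (gtx x1 y1 - gtx x2 y2)
       <= l * fro_norm (x1 - x2) + l * fro_norm (y1 - y2)) ->
  (forall x1 y1 x2 y2, Xset C x1 -> dom h y1 -> Xset C x2 -> dom h y2 ->
     fro_norm (gty x1 y1 - gty x2 y2)
       <= l * fro_norm (x1 - x2) + l * fro_norm (y1 - y2)) ->
  l < p ->
  forall z : 'M[R]_(d1, r),
    (* all the min / max below are attained *)
    (forall x, Xset C x -> max_attained setT (fun y => fhat_r f h rho p x y z)) /\
    (forall y, min_attained (Xset C) (fun x => fhat_r f h rho p x y z)) /\
    min_attained (Xset C) (fun x => Phi f h rho p x z) /\
    max_attained setT
      (fun y => ereal_inf [set fhat_r f h rho p x y z | x in Xset C]) /\
    max_attained setT (fun y => Psi_r f h rho p C y z) /\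
    (* min_x max_y fhat_r = max_y min_x fhat_r *)
    ereal_inf [set Phi f h rho p x z | x in Xset C]
      = ereal_sup [set ereal_inf [set fhat_r f h rho p x y z | x in Xset C]
                  | y in [set: 'rV[R]_d2]] /\
    (* P(z) = min_x Phi(x;z) = max_y Psi_r(y;z) *)
    ereal_inf [set Phi f h rho p x z | x in Xset C]
      = ereal_sup [set Psi_r f h rho p C y z | y in [set: 'rV[R]_d2]].
Proof.
move=> C_gt _ h_proper h_lsc h_wcvx dom_closed _ dom_bounded [U _ [U_dom f_grad]] _ _ _
  f_PL _ ft_grad gtx_lip gty_lip lt_lp z.
have X_bounded : fro_bounded (@Xset R d1 r C) by exists C => x.
have X0 : Xset C (0 : 'M[R]_(d1, r)) by rewrite /Xset /= fro_norm0; lra.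
have stationary := ftilde_stationary_max h_proper
  (fun x y Cx hy => f_grad _ _ (U_dom x y Cx hy)) f_PL ft_grad.
have [Gr_max [Gr_min [minPhi [maxInf [minimax PsiE]]]]] := prox_minimax z
  (@fro_ball_convex R d1 r C) (@fro_ball_closed R d1 r C) X_bounded (ex_intro _ _ X0)
  h_proper h_lsc (weakly_convex_dom_convex h_proper h_wcvx) dom_closed dom_bounded
  ft_grad gtx_lip gty_lip lt_lp stationary.
have Psi_rE y : Psi_r f h rho p C y z = ereal_inf [set fhat_r f h rho p x y z | x in Xset C].
  exact: PsiE.
rewrite (funext Psi_rE).
split; first exact: Gr_max.
split; first exact: Gr_min.
split; first exact: minPhi.
by do 3!(split=> //).
Qed.
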